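(* Let $1\le f\le\lfloor n/2\rfloor$ and $J_0=(n-2f+1,n-2f+2,\dots,n)$. (1) For every $d\in\mathcal D_f$ there exists $w\in\mathfrak S_n$ with $d_0=dw$ and $\ell(d_0)=\ell(d)+\ell(w)$. (2) For every $J\in\mathcal P_f$ there exists $w'\in\mathfrak S_n$ with $d_{J_0}=d_Jw'$ and $\ell(d_{J_0})=\ell(d_J)+\ell(w')$. (3) For every $d\in\mathcal D_{\nu_f}$ with $d\ne d_0d_{J_0}$ there exists $1\le j\le n-1$ such that $ds_j\in\mathcal D_{\nu_f}$ and $\ell(ds_j)=\ell(d)+1$.
   Context: $\mathfrak S_n$ acts on $\{1,\dots,n\}$ on the right: $(a)(\sigma\tau)=((a)\sigma)\tau$; $s_j=(j,j+1)$, $\ell$ is the Coxeter length. Let $\nu_f=((2^f),(n-2f))$ and $\mathfrak t^{\nu_f}$ the bitableau with $1,\dots,n$ entered in order along the rows of the first component (shape $(2^f)$) and then along the single row of the second component; $\mathfrak t^{\nu_f}d$ replaces each entry $a$ by $(a)d$. $\mathcal D_{\nu_f}$ is the set of $d\in\mathfrak S_n$ such that $\mathfrak t^{\nu_f}d$ is row standard and the first column of its first component increases from top to bottom; $\mathcal D_f=\mathcal D_{\nu_f}\cap\mathfrak S_{2f}$. $d_0\in\mathfrak S_{2f}$ is defined by $(a)d_0=(a+1)/2$ for odd $a\in\{1,\dots,2f-1\}$ and $(a)d_0=2f+1-a/2$ for even $a\in\{2,\dots,2f\}$. $\mathcal P_f=\{(i_1,\dots,i_{2f}):1\le i_1<\dots<i_{2f}\le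 n\}$, and for $J\in\mathcal P_f$, $d_J$ is the unique element of $\mathcal D_{\nu_f}$ such that the first component of $\mathfrak t^{\nu_f}d_J$ is the tableau obtained by inserting the entries of $J$ in increasing order along successive rows of the shape $(2^f)$. *)

(* Permutations of {1,...,n} are modelled by 'S_n acting on
   'I_n = {0,...,n-1}; the paper's entry a corresponds to the ordinal a-1.
   MathComp's product satisfies (s * t) x = t (s x), i.e. it is exactly the
   paper's right action: (a)(s t) = ((a)s)t. *)
From mathcomp Require Import all_boot all_order all_fingroup.
Set Implicit Arguments. Unset Strict Implicit. Unset Printing Implicit Defensive.

Definition act (n : nat) (d : 'S_n) (a : nat) : nat :=
  if a is a'.+1 then
    (if (insub a' : option 'I_n) is Some i then (d i).+1 else a)
  else a.

Definition sadj (n j : nat) : 'S_n :=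
  if ((insub j.-1 : option 'I_n), (insub j : option 'I_n)) is (Some a, Some b)
  then tperm a b else 1%g.

Definition has_word_len (n : nat) (s : 'S_n) (k : nat) : bool :=
  [exists t : k.-tuple 'I_n.-1, s == (\prod_(i <- t) sadj n i.+1)%g].

(* Coxeter length: minimal number of simple transpositions whose product is s.
   (Every permutation has a reduced word of length <= n(n-1)/2 <= n*n, so the
   cap n*n in the minimum is harmless.) *)
Definition len (n : nat) (s : 'S_n) : nat :=
  \big[minn/(n * n)]_(k < (n * n).+1 | has_word_len s k) k.

(* The bitableau t^{nu_f} d: entry in row r, column c (1-indexed) of the first
   component (shape (2^f)), and entry k (1-indexed) of the second component. *)
Definition tab1 (n f : nat) (d : 'S_n) (r c : nat) : nat := act d (2 * (r - 1) + c).
Definition tab2 (n f : nat) (d : 'S_n) (k : nat) : nat := act d (2 * f + k).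

Definition Dnu (n f : nat) (d : 'S_n) : bool :=
  [&& [forall r : 'I_f, tab1 f d r.+1 1 < tab1 f d r.+1 2],
      [forall k : 'I_(n - 2 * f).-1, tab2 f d k.+1 < tab2 f d k.+2] &
      [forall r : 'I_f.-1, tab1 f d r.+1 1 < tab1 f d r.+2 1]].

Definition inS2f (n f : nat) (d : 'S_n) : bool :=
  [forall i : 'I_n, (2 * f <= i) ==> (d i == i)].

Definition Df (n f : nat) (d : 'S_n) : bool := Dnu f d && inS2f f d.

Definition d0img (f a : nat) : nat :=
  if a <= 2 * f then (if odd a then (a + 1) %/ 2 else 2 * f + 1 - a %/ 2) else a.
Definition d0fun (n f : nat) (i : 'I_n) : 'I_n := insubd i (d0img f i.+1).-1.
(* the permutation with graph d0fun (which is injective when 2f <= n) *)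
Definition d0 (n f : nat) : 'S_n := insubd (1%g : 'S_n) [ffun i => d0fun f i].

Definition inP (n f : nat) (J : seq nat) : bool :=
  [&& size J == 2 * f, sorted ltn J & all (fun i => 0 < i <= n) J].

Definition tabJ (J : seq nat) (r c : nat) : nat := nth 0 J (2 * (r - 1) + c - 1).

(* d_J: the (unique) d in D_{nu_f} whose first component is tabJ J *)
Definition is_dJ (n f : nat) (J : seq nat) (d : 'S_n) : bool :=
  Dnu f d && [forall r : 'I_f, forall c : 'I_2, tab1 f d r.+1 c.+1 == tabJ J r.+1 c.+1].
Definition dJ (n f : nat) (J : seq nat) : 'S_n :=
  odflt 1%g [pick d | is_dJ f J d].

Definition J0 (n f : nat) : seq nat := iota (n - 2 * f + 1) (2 * f).

(* Right multiplication by s_j exchanges the entries j and j + 1 of the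
   bitableau t^{nu_f} d. It lengthens d exactly when j occurs before j + 1
   (d^-1 j < d^-1 (j + 1), lengths being numbers of inversions), and it leaves
   D_nu only when j and j + 1 are adjacent in a row or in the first column.
   So if no lengthening move stays in D_nu, every ascent of d^-1 is an edge of
   the shape. This rigidity forces the second row to read 1, ..., n - 2f and the
   first component to be filled as by d_0: the first column by the smallest
   remaining values downwards, the second column by the largest ones upwards.
   That is (3), and (1) follows by climbing with moves s_j, j < 2f. For (2),
   while J <> J_0 some j in J has j + 1 outside J, and replacing j by j + 1 in
   J is such a lengthening move from d_J. *)

From Stdlib Require Import Wf_nat.
From mathcomp Require Import zify.
From Pilot Require Import Defs.
From mathcomp Require Import all_boot all_order all_fingroup.
Set Implicit Arguments. Unset Strict Implicit. Unset Printing Implicit Defensive.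

(* fingroup's action library also exports a constant [act]. *)
Local Notation act := Pilot.Defs.act.

Section Action.
Variable n : nat.
Implicit Types d e : 'S_n.

Lemma act_ord d (i : 'I_n) : act d i.+1 = (d i).+1.
Proof. by rewrite /act valK. Qed.

Lemma act_out d a : n < a -> act d a = a.
Proof. by case: a => // a lt_n_a; rewrite /act insubF // ltnNge -ltnS lt_n_a. Qed.

Lemma act_in d a : 1 <= a <= n -> 1 <= act d a <= n.
Proof. by case: a => // a /andP[_ lt_a_n]; rewrite -[a]/(Ordinal lt_a_n : nat) act_ord /=. Qed.

Lemma act_permM d e a : act (d * e)%g a = act e (act d a).
Proof.
case: a => // a; case: (ltnP a n) => [lt_a_n | le_n_a]; last by rewrite !act_out.
by rewrite -[a]/(Ordinal lt_a_n : nat) !act_ord permM.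
Qed.

Lemma act_perm1 a : act (1%g : 'S_n) a = a.
Proof.
case: a => // a; case: (ltnP a n) => [lt_a_n | le_n_a]; last by rewrite !act_out.
by rewrite -[a]/(Ordinal lt_a_n : nat) act_ord perm1.
Qed.

Lemma act_permK d : cancel (act d) (act d^-1).
Proof. by move=> a; rewrite -act_permM mulgV act_perm1. Qed.

Lemma act_permKV d : cancel (act d^-1) (act d).
Proof. by move=> a; rewrite -act_permM mulVg act_perm1. Qed.

Lemma act_perm_inj d : injective (act d).
Proof. exact: can_inj (act_permK d). Qed.

Lemma eq_perm_act d e : {in [pred a | 1 <= a <= n], act d =1 act e} -> d = e.
Proof.
move=> eq_de; apply/permP => i; apply: val_inj; apply: succn_inj.
by rewrite -!act_ord eq_de // inE /= ltn_ord.
Qed.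

End Action.

Definition adjswap (j a : nat) : nat := if a == j then j.+1 else if a == j.+1 then j else a.

Lemma adjswapK j : involutive (adjswap j).
Proof. by move=> a; rewrite /adjswap; do !case: eqP; lia. Qed.

Lemma adjswap_inj j : injective (adjswap j).
Proof. exact: inv_inj (adjswapK j). Qed.

Lemma adjswap_mono j a b : a < b -> (a, b) != (j, j.+1) -> adjswap j a < adjswap j b.
Proof. by rewrite /adjswap xpair_eqE; do !case: eqP; lia. Qed.

Section SimpleTranspositions.
Variable n : nat.
Implicit Types s d : 'S_n.

Lemma sadj_tperm (a b : 'I_n) : b = a.+1 :> nat -> sadj n b = tperm a b.
Proof. by move=> eq_b; rewrite /sadj eq_b /= -eq_b !valK. Qed.

Lemma sadjE j : 1 <= j < n -> exists a b : 'I_n, [/\ j = b, b = a.+1 :> nat & sadj n j = tperm a b].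
Proof.
case/andP=> j_gt0 lt_j_n; have lt_pj_n : j.-1 < n by lia.
have eq_j : j = (j.-1).+1 by lia.
exists (Ordinal lt_pj_n), (Ordinal lt_j_n); split=> //.
exact: (@sadj_tperm (Ordinal lt_pj_n) (Ordinal lt_j_n)).
Qed.

Lemma act_sadj j a : 1 <= j < n -> act (sadj n j) a = adjswap j a.
Proof.
move=> /sadjE[i [k [-> eq_k ->]]]; rewrite /adjswap.
case: a => [|a]; first by rewrite eq_k.
case: (ltnP a n) => [lt_a_n | le_n_a]; last first.
  by rewrite act_out // !ifF //; apply/eqP; have := ltn_ord k; lia.
rewrite -[a]/(Ordinal lt_a_n : nat) act_ord.
case: (tpermP i k (Ordinal lt_a_n)) => [->|->|ne_i ne_k] /=.
- by rewrite -eq_k eqxx.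
- by rewrite ifF ?eqxx //; apply/eqP; lia.
rewrite !ifF //; apply/eqP => eq_a; [apply: ne_k | apply: ne_i]; apply: val_inj => /=; lia.
Qed.

End SimpleTranspositions.

Section Length.
Variable n : nat.
Implicit Types s : 'S_n.
Local Open Scope group_scope.

Definition inversions s := [set p : 'I_n * 'I_n | (p.1 < p.2) && (s p.2 < s p.1)].
Definition ninv s := #|inversions s|.

Lemma ninv1 : ninv 1 = 0.
Proof.
apply/eqP; rewrite cards_eq0; apply/eqP/setP => -[i j].
by rewrite !inE !perm1 /=; apply/negbTE/negP => /andP[]; lia.
Qed.

Lemma ninv_le s : ninv s <= n * n.
Proof. by apply: leq_trans (max_card _) _; rewrite card_prod card_ord. Qed.

Lemma tperm_val (a b x : 'I_n) :
  tperm a b x = (if x == a then b else if x == b then a else x) :> nat.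
Proof.
by case: tpermP => [->|->|/eqP/negPf-> /eqP/negPf->]; rewrite ?eqxx //; case: eqP => [->|].
Qed.

Lemma ltn_tperm_adj (a b u v : 'I_n) : b = a.+1 :> nat ->
  (u, v) != (a, b) -> (u, v) != (b, a) -> (tperm a b u < tperm a b v) = (u < v).
Proof.
move=> eq_b; rewrite !xpair_eqE !tperm_val -!(inj_eq val_inj) /= eq_b.
by do !case: eqP; lia.
Qed.

Lemma ninv_mul_tperm s (a b : 'I_n) : b = a.+1 :> nat -> s^-1 a < s^-1 b ->
  ninv (s * tperm a b) = (ninv s).+1.
Proof.
move=> eq_b lt_ab; pose P := (s^-1 a, s^-1 b).
have notP : P \notin inversions s by rewrite inE /= !permKV eq_b; apply/negP => /andP[_]; lia.
have -> : (ninv s).+1 = (P \notin inversions s) + ninv s by rewrite notP.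
rewrite /ninv -cardsU1; apply: eq_card => -[x y].
rewrite !inE /= !permM.
case: (eqVneq (x, y) P) => [[-> ->] | ne_P] /=.
  by rewrite lt_ab !permKV tpermL tpermR eq_b ltnSn.
case: (ltnP x y) => //= lt_xy; apply: ltn_tperm_adj => //.
  apply/negP; rewrite xpair_eqE => /andP[/eqP eq_y /eqP eq_x].
  by move: lt_xy lt_ab; rewrite -(permK s x) -(permK s y) eq_x eq_y; lia.
apply: contra ne_P; rewrite /P xpair_eqE => /andP[/eqP <- /eqP <-].
by rewrite !permK.
Qed.

Lemma ninv_mul_tperm_desc s (a b : 'I_n) : b = a.+1 :> nat -> s^-1 b < s^-1 a ->
  ninv s = (ninv (s * tperm a b)).+1.
Proof.
move=> eq_b lt_ba; have := ninv_mul_tperm (s := s * tperm a b) eq_b.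
by rewrite -mulgA tperm2 mulg1 invMg tpermV !permM tpermL tpermR; apply.
Qed.

Lemma ninv_mul_tperm_le s (a b : 'I_n) : b = a.+1 :> nat -> ninv (s * tperm a b) <= (ninv s).+1.
Proof.
move=> eq_b; case: (ltngtP (s^-1 a) (s^-1 b)) => [lt_ab | lt_ba | /val_inj/perm_inj eq_ab].
- by rewrite ninv_mul_tperm.
- by rewrite [in X in _ <= X](ninv_mul_tperm_desc eq_b lt_ba); lia.
- by move: eq_b; rewrite eq_ab; lia.
Qed.

Lemma ninv_mul_prod_le s (r : seq 'I_n.-1) :
  ninv (s * \prod_(i <- r) sadj n i.+1) <= ninv s + size r.
Proof.
elim: r s => [|i r IH] s; first by rewrite big_nil mulg1 addn0.
have lt_i : i.+1 < n by have := ltn_ord i; lia.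
rewrite big_cons mulgA /= addnS -addSn; apply: leq_trans (IH _) _.
have [a [b [_ eq_b ->]]] := sadjE (n := n) (j := i.+1) ltac:(lia).
by rewrite leq_add2r ninv_mul_tperm_le.
Qed.

Lemma perm_eq1_of_ascents s : (forall a b : 'I_n, b = a.+1 :> nat -> s a < s b) -> s = 1.
Proof.
move=> asc; apply/permP => i; rewrite perm1; apply: val_inj => /=.
pose F k : nat := s (insubd i k).
have F_asc k : k.+1 < n -> F k < F k.+1.
  by move=> lt_k; apply: asc; rewrite !insubdK //; lia.
have F_ge k : k < n -> k <= F k.
  by elim: k => // k IH lt_k; have := F_asc k lt_k; have := IH (ltnW lt_k); lia.
have F_le k : k < n -> F (n.-1 - k) + k <= n.-1.
  elim: k => [_ | k IH lt_k]; first by have := ltn_ord (s (insubd i n.-1)); rewrite subn0 /F; lia.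
  have := F_asc (n.-1 - k.+1) ltac:(lia); rewrite (_ : (n.-1 - k.+1).+1 = n.-1 - k); last by lia.
  by have := IH (ltnW lt_k); lia.
have F_i : F i = s i by rewrite /F valKd.
have := F_ge i (ltn_ord i); have := F_le (n.-1 - i) ltac:(have := ltn_ord i; lia).
by rewrite subKn ?F_i; have := ltn_ord i; lia.
Qed.

Lemma descent_of_neq1 s : s != 1 -> exists a b : 'I_n, b = a.+1 :> nat /\ s^-1 b < s^-1 a.
Proof.
move=> ne1.
case: (boolP [exists a : 'I_n, [exists b : 'I_n, (val b == a.+1) && (s^-1 b < s^-1 a)]]).
  by case/existsP=> a /existsP[b /andP[/eqP eq_b lt_ba]]; exists a, b.
move/existsPn=> no_descent; case/eqP: ne1; rewrite -[s]invgK.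
rewrite (@perm_eq1_of_ascents s^-1) ?invg1 // => a b eq_b.
have /existsPn/(_ b) := no_descent a; rewrite /= eq_b eqxx /= -leqNgt leq_eqVlt.
by case/orP=> // /eqP/val_inj/perm_inj eq_ab; move: eq_b; rewrite eq_ab; lia.
Qed.

Lemma word_of_ninv s :
  exists2 r : seq 'I_n.-1, size r = ninv s & s = \prod_(i <- r) sadj n i.+1.
Proof.
move ninv_s : (ninv s) => k; elim: k s ninv_s => [|k IH] s ninv_s.
  exists [::]; rewrite ?big_nil //; apply/eqP.
  apply: contraT => /descent_of_neq1[a [b [eq_b lt_ba]]].
  by rewrite (ninv_mul_tperm_desc eq_b lt_ba) in ninv_s.
have /descent_of_neq1[a [b [eq_b lt_ba]]] : s != 1.
  by apply/eqP => s1; move: ninv_s; rewrite s1 ninv1.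
have lt_a : a < n.-1 by have := ltn_ord b; lia.
have sadj_a : sadj n (Ordinal lt_a).+1 = tperm a b by rewrite -sadj_tperm //= -eq_b.
have [r size_r eq_r] :
    exists2 r : seq 'I_n.-1, size r = k & s * tperm a b = \prod_(i <- r) sadj n i.+1.
  by apply: IH; move: ninv_s; rewrite (ninv_mul_tperm_desc eq_b lt_ba) => -[].
exists (rcons r (Ordinal lt_a)); first by rewrite size_rcons size_r.
by rewrite -cats1 big_cat big_seq1 /= -eq_r sadj_a -mulgA tperm2 mulg1.
Qed.

Lemma len_le_word s k : has_word_len s k -> k <= n * n -> len s <= k.
Proof.
move=> word_k le_k; pose i : 'I_(n * n).+1 := Ordinal (le_k : k < (n * n)%N.+1).
exact: (Order.TotalTheory.bigmin_le_cond (n * n)%N (j := i) (@nat_of_ord _) word_k).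
Qed.

Lemma lenE s : len s = ninv s.
Proof.
apply/eqP; rewrite eqn_leq; apply/andP; split.
  have [r /eqP size_r eq_r] := word_of_ninv s; apply: len_le_word (ninv_le s).
  by apply/existsP; exists (Tuple size_r); rewrite -eq_r.
rewrite /len; apply: (big_ind (fun k => ninv s <= k)) => [|x y le_x le_y|k /existsP[t /eqP ->]].
- exact: ninv_le.
- by rewrite leq_min le_x.
by have := ninv_mul_prod_le 1 t; rewrite mul1g ninv1 size_tuple.
Qed.

Lemma len1 : len (1 : 'S_n) = 0.
Proof. by rewrite lenE ninv1. Qed.

Lemma len_le s : len s <= n * n.
Proof. by rewrite lenE ninv_le. Qed.

Lemma len_mul_le s t : len (s * t) <= len s + len t.
Proof.
have [r size_r {1}->] := word_of_ninv t.
by rewrite !lenE -size_r ninv_mul_prod_le.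
Qed.

Lemma len_sadj_le j : 1 <= j < n -> len (sadj n j) <= 1.
Proof.
case/sadjE=> a [b [_ eq_b ->]].
by have := ninv_mul_tperm_le 1 eq_b; rewrite mul1g ninv1 lenE.
Qed.

End Length.

(* Positions p < q, numbered as in t^{nu_f}, that are adjacent in a row or in
   the first column of the shape nu_f. *)
Definition nu_edge (n f p q : nat) : bool :=
  (q == p.+1) && (odd p && (p < 2 * f) || (2 * f < p) && (q <= n))
  || (q == p.+2) && odd p && (q < 2 * f).

Section Dnu.
Variables n f : nat.
Implicit Types d : 'S_n.

Lemma nu_edge_row r : r < f -> nu_edge n f (2 * r + 1) (2 * r + 2).
Proof. by rewrite /nu_edge; lia. Qed.

Lemma nu_edge_col r : r.+1 < f -> nu_edge n f (2 * r + 1) (2 * r + 3).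
Proof. by rewrite /nu_edge; lia. Qed.

Lemma nu_edge_tail p : 2 * f < p < n -> nu_edge n f p p.+1.
Proof. by case/andP=> gt_p lt_p; rewrite /nu_edge eqxx gt_p lt_p !orbT. Qed.

Lemma Dnu_edgeP d : Dnu f d <-> forall p q, nu_edge n f p q -> act d p < act d q.
Proof.
rewrite /Dnu /tab1 /tab2; split.
  case/and3P=> /forallP row /forallP tail /forallP col p q.
  case/orP=> [/andP[/eqP-> /orP[/andP[odd_p lt_p] | /andP[gt_p le_q]]]
            | /andP[/andP[/eqP-> odd_p] lt_q]].
  - have lt_r : p./2 < f by clear -lt_p; lia.
    have e1 : 2 * (p./2.+1 - 1) + 1 = p by clear -odd_p; lia.
    have e2 : 2 * (p./2.+1 - 1) + 2 = p.+1 by clear -odd_p; lia.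
    by have := row (Ordinal lt_r); rewrite e1 e2.
  - have lt_k : p - 2 * f - 1 < (n - 2 * f).-1 by clear -gt_p le_q; lia.
    have e1 : 2 * f + (p - 2 * f - 1).+1 = p by clear -gt_p; lia.
    have e2 : 2 * f + (p - 2 * f - 1).+2 = p.+1 by clear -gt_p; lia.
    by have := tail (Ordinal lt_k); rewrite e1 e2.
  - have lt_r : p./2 < f.-1 by clear -lt_q; lia.
    have e1 : 2 * (p./2.+1 - 1) + 1 = p by clear -odd_p; lia.
    have e2 : 2 * (p./2.+2 - 1) + 1 = p.+2 by clear -odd_p; lia.
    by have := col (Ordinal lt_r); rewrite e1 e2.
move=> edge; apply/and3P; split; apply/forallP=> i; apply: edge; have lt_i := ltn_ord i.
- by rewrite subn1 nu_edge_row.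
- by rewrite [_ + i.+2]addnS nu_edge_tail //; clear -lt_i; lia.
- by rewrite (_ : 2 * (i.+2 - 1) + 1 = 2 * (i.+1 - 1) + 3) ?nu_edge_col //; clear -lt_i; lia.
Qed.

End Dnu.

Lemma nu_edge_first n f p q : nu_edge n f p q -> p <= 2 * f ->
  odd p /\ (q = p.+1 \/ q = p.+2 /\ q < 2 * f).
Proof. by rewrite /nu_edge; lia. Qed.

Lemma nu_edge_same_part n f p q : nu_edge n f p q -> (p <= 2 * f) = (q <= 2 * f).
Proof. by rewrite /nu_edge => edge; apply/idP/idP; lia. Qed.

Lemma nu_edge_row_even n f q : ~~ odd q -> 0 < q <= 2 * f -> nu_edge n f q.-1 q.
Proof. by rewrite /nu_edge; lia. Qed.

Section StepUp.
Variables n f : nat.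
Implicit Types d x y : 'S_n.
Local Open Scope group_scope.

Lemma Dnu_mul_sadj d j : 1 <= j < n -> Dnu f d ->
  (forall p q, nu_edge n f p q -> (act d p, act d q) != (j, j.+1)) -> Dnu f (d * sadj n j).
Proof.
move=> lt_j /Dnu_edgeP Dd no_jump; apply/Dnu_edgeP => p q edge.
by rewrite !act_permM !act_sadj //; apply: adjswap_mono (Dd _ _ edge) (no_jump _ _ edge).
Qed.

Lemma len_mul_sadj d j : 1 <= j < n -> act d^-1 j < act d^-1 j.+1 ->
  len (d * sadj n j) = (len d).+1.
Proof.
move=> lt_j; have [a [b [eq_j eq_b ->]]] := sadjE lt_j.
by rewrite eq_j {1}eq_b !act_ord ltnS !lenE => /ninv_mul_tperm->.
Qed.

Definition weak_le x y := exists w, y = x * w /\ len y = len x + len w.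

Lemma weak_le_refl x : weak_le x x.
Proof. by exists 1; rewrite mulg1 len1 addn0. Qed.

Lemma weak_le_sadj x y j : 1 <= j < n ->
  len (x * sadj n j) = (len x).+1 -> weak_le (x * sadj n j) y -> weak_le x y.
Proof.
move=> lt_j len_xs [w [-> len_y]]; exists (sadj n j * w); rewrite mulgA; split=> //.
have := len_mul_le x (sadj n j * w); rewrite mulgA len_y len_xs.
by have := len_mul_le (sadj n j) w; have := len_sadj_le lt_j; lia.
Qed.

Definition up_step d j := Dnu f (d * sadj n j) && (len (d * sadj n j) == len d + 1).

(* The combinatorial form of: no s_j with j in [j0, j1) lengthens d inside D_nu
   (see ascents_blocked_of_no_up). *)
Definition ascents_blocked d j0 j1 := forall j, j0 <= j < j1 ->
  act d^-1 j < act d^-1 j.+1 -> nu_edge n f (act d^-1 j) (act d^-1 j.+1).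

Lemma ascents_blocked_of_no_up d j0 j1 : 0 < j0 -> j1 <= n -> Dnu f d ->
  ~~ has (up_step d) (index_iota j0 j1) -> ascents_blocked d j0 j1.
Proof.
move=> j0_gt0 le_j1 Dd no_up j range asc; apply: contraNT no_up => no_edge.
have lt_j : 1 <= j < n by lia.
apply/hasP; exists j; first by rewrite mem_index_iota.
rewrite /up_step len_mul_sadj // addn1 eqxx andbT; apply: Dnu_mul_sadj => // p q edge.
by apply: contra no_edge; rewrite xpair_eqE => /andP[/eqP <- /eqP <-]; rewrite !act_permK.
Qed.

End StepUp.

Lemma change_point (P : pred nat) a b : a <= b -> P a -> ~~ P b ->
  exists i, [/\ a <= i < b, P i & ~~ P i.+1].
Proof.
elim: b => [|b IH] le_ab Pa nPb; first by move: le_ab Pa nPb; rewrite leqn0 => /eqP-> ->.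
case: (leqP a b) => [le_ab' | lt_ba]; last by move: Pa nPb; rewrite (_ : a = b.+1) ?Pa //; lia.
case Pb: (P b); first by exists b; rewrite Pb le_ab' leqnn.
by have [i [i_rng Pi nPi]] := IH le_ab' Pa (negbT Pb); exists i; split=> //; lia.
Qed.

Lemma incr_bounded_eq_id m (v : nat -> nat) :
  (forall k, 0 < k < m -> v k < v k.+1) -> (forall k, 0 < k <= m -> 0 < v k <= m) ->
  forall k, 0 < k <= m -> v k = k.
Proof.
move=> v_incr v_rng.
have ge_k k : 0 < k <= m -> k <= v k.
  elim: k => // k IH k_in; case: (posnP k) => [k0 | k_gt0].
    by move: k_in; rewrite k0 => /v_rng; lia.
  by have := IH ltac:(lia); have := v_incr k ltac:(lia); lia.
have le_k i : i < m -> v (m - i) + i <= m.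
  elim: i => [m_gt0 | i IH lt_i]; first by rewrite subn0 addn0; have := v_rng m; lia.
  have := v_incr (m - i.+1) ltac:(lia); rewrite (_ : (m - i.+1).+1 = m - i); last by lia.
  by have := IH (ltnW lt_i); lia.
move=> k k_in; have := ge_k k k_in; have := le_k (m - k) ltac:(lia).
by rewrite subKn; lia.
Qed.

Lemma incr_pred_closed_eq_id m (v : nat -> nat) :
  (forall k, 0 < k < m -> v k < v k.+1) -> (forall k, 0 < k <= m -> 0 < v k) ->
  (forall k, 0 < k <= m -> 1 < v k -> exists2 k', 0 < k' <= m & v k' = (v k).-1) ->
  forall k, 0 < k <= m -> v k = k.
Proof.
move=> v_incr v_pos v_pred.
have v_mono : {in [pred k | 0 < k <= m] &, {homo v : i j / i < j}}.
  apply: homo_ltn_in => [x y z | i j i_in j_in k | i]; rewrite ?inE.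
  - exact: ltn_trans.
  - by move: i_in j_in; rewrite !inE; lia.
  - by move=> i_in i1_in; apply: v_incr; lia.
elim/ltn_ind=> k IH k_in.
have ge_k : k <= v k.
  case: (posnP k.-1) => [k1 | k_gt1]; first by have := v_pos k k_in; lia.
  have := IH k.-1 ltac:(lia) ltac:(lia); have := v_incr k.-1 ltac:(lia).
  by rewrite prednK; lia.
case: (ltngtP (v k) k) => [| gt_k |] //; first by lia.
have [k' k'_in vk'] := v_pred k k_in ltac:(lia).
case: (ltngtP k' k) => [lt_k'k | lt_kk' | eq_k'k].
- by have := IH k' lt_k'k k'_in; lia.
- by have := v_mono k k' ltac:(by rewrite inE) ltac:(by rewrite inE) lt_kk'; lia.
- by move: vk'; rewrite eq_k'k; have := v_pos k k_in; lia.
Qed.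

Section FirstComponent.
Variables (n f m : nat) (d : 'S_n).
Hypotheses (le_n : m + 2 * f <= n) (Dd : Dnu f d)
  (first_vals : forall a, 0 < a <= n -> (a <= 2 * f) = (m < act d a <= m + 2 * f))
  (blocked : ascents_blocked f d m.+1 (m + 2 * f)).

Local Notation u := (act d).
Local Notation g := (act d^-1).

Let edge_lt p q : nu_edge n f p q -> u p < u q.
Proof. exact: (Dnu_edgeP f d).1 Dd p q. Qed.

Lemma val_in_window a : 0 < a <= 2 * f -> m < u a <= m + 2 * f.
Proof. by move=> a_rng; rewrite -first_vals //; lia. Qed.

Lemma pos_in_first v : m < v <= m + 2 * f -> 0 < g v <= 2 * f.
Proof.
move=> v_rng; have /andP[g_gt0 le_g] := act_in d^-1 (a := v) ltac:(lia).
by rewrite g_gt0 first_vals ?act_permKV ?g_gt0.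
Qed.

Lemma col1_lt p q : odd p -> odd q -> p < q < 2 * f -> u p < u q.
Proof.
have mono : {in [pred r | r < f] &, {homo (fun r => u (2 * r + 1)) : r s / r < s}}.
  apply: homo_ltn_in => [x y z | i j i_in j_in k | r]; rewrite ?inE.
  - exact: ltn_trans.
  - by move: i_in j_in; rewrite !inE; lia.
  by move=> _ lt_r; rewrite (_ : 2 * r.+1 + 1 = 2 * r + 3) ?edge_lt ?nu_edge_col //; lia.
move=> odd_p odd_q pq_rng.
have [e_p e_q] : 2 * p./2 + 1 = p /\ 2 * q./2 + 1 = q by split; lia.
by rewrite -e_p -e_q; apply: mono; rewrite ?inE; lia.
Qed.

Lemma col1_lt_col2 p q : odd p -> ~~ odd q -> p < 2 * f -> 0 < q <= 2 * f -> u p < u q.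
Proof.
move=> odd_p even_q lt_p q_rng; rewrite ltnNge leq_eqVlt negb_or.
apply/andP; split.
  by apply/eqP => /act_perm_inj eq_qp; move: odd_p; rewrite -eq_qp (negPf even_q).
apply/negP => lt_vals.
(* Between u q and u p some value v sits at an even position and v + 1 at an
   odd one; as no edge starts at an even position, v + 1 comes first, which
   contradicts the first column and the row of v. *)
have [v [v_rng even_v odd_v]] := change_point (P := fun v => ~~ odd (g v)) (ltnW lt_vals)
  ltac:(by rewrite /= act_permK) ltac:(by rewrite /= act_permK negbK).
have := val_in_window (a := q) q_rng; have := val_in_window (a := p) ltac:(lia) => p_val q_val.
have := @pos_in_first v ltac:(lia); have := @pos_in_first v.+1 ltac:(lia) => gv1_rng gv_rng.
move/negbNE: odd_v => odd_v.
have desc : g v.+1 < g v.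
  case: (ltngtP (g v.+1) (g v)) => // [asc | /act_perm_inj]; last by lia.
  have [odd_gv _] := nu_edge_first (@blocked v ltac:(lia) asc) ltac:(lia).
  by rewrite odd_gv in even_v.
have row : u (g v).-1 < v.
  by rewrite -{2}(act_permKV d v) edge_lt // nu_edge_row_even //; lia.
have uv1 : u (g v.+1) = v.+1 by rewrite act_permKV.
case: (ltngtP (g v.+1) (g v).-1) => [lt_g | gt_g | eq_g]; last by move: row; rewrite -eq_g uv1; lia.
- by have := col1_lt (p := g v.+1) (q := (g v).-1) odd_v ltac:(lia) ltac:(lia); lia.
- by lia.
Qed.

Lemma col1_val r : r < f -> u (2 * r + 1) = m + r.+1.
Proof.
elim/ltn_ind: r => r IH lt_r.
have lower : m + r.+1 <= u (2 * r + 1).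
  case: r IH lt_r => [|r] IH lt_r; first by have := @val_in_window (2 * 0 + 1) ltac:(lia); lia.
  have := IH r (ltnSn r) ltac:(lia).
  by have := @col1_lt (2 * r + 1) (2 * r.+1 + 1) ltac:(lia) ltac:(lia) ltac:(lia); lia.
have gv_rng := @pos_in_first (m + r.+1) ltac:(lia).
have uv : u (g (m + r.+1)) = m + r.+1 by rewrite act_permKV.
case: (boolP (odd (g (m + r.+1)))) => [odd_gv | even_gv]; last first.
  by have := @col1_lt_col2 (2 * r + 1) _ ltac:(lia) even_gv ltac:(lia) ltac:(lia); lia.
have e_gv : g (m + r.+1) = 2 * (g (m + r.+1))./2 + 1 by lia.
move: uv; rewrite e_gv; set s := _./2.
case: (ltngtP s r) => [lt_sr | lt_rs | -> //].
- by rewrite IH //; lia.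
- by have := @col1_lt (2 * r + 1) (2 * s + 1) ltac:(lia) ltac:(lia) ltac:(lia); lia.
Qed.

Lemma col2_val r : r < f -> u (2 * r + 2) = m + 2 * f - r.
Proof.
have even_top w : m + f < w <= m + 2 * f -> ~~ odd (g w).
  move=> w_rng; apply/negP => odd_gw; have gw_rng := @pos_in_first w ltac:(lia).
  have := col1_val (r := (g w)./2) ltac:(lia).
  by rewrite (_ : 2 * _./2 + 1 = g w) ?act_permKV //; lia.
have desc w : m + f < w < m + 2 * f -> g w.+1 < g w.
  move=> w_rng; case: (ltngtP (g w.+1) (g w)) => // [asc | /act_perm_inj]; last by lia.
  have [odd_gw _] := nu_edge_first (@blocked w ltac:(lia) asc) ltac:(have := @pos_in_first w; lia).
  by have := even_top w ltac:(lia); rewrite odd_gw.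
(* The top f window values sit at even positions that decrease as the value
   grows, so these positions are 2, 4, ..., 2f from the top value down. *)
pose h k := (g (m + 2 * f + 1 - k))./2.
have h_id : forall k, 0 < k <= f -> h k = k.
  apply: incr_bounded_eq_id => k k_rng; rewrite /h.
    have := desc (m + 2 * f - k) ltac:(lia).
    rewrite (_ : (m + 2 * f - k).+1 = m + 2 * f + 1 - k); last by lia.
    rewrite (_ : m + 2 * f + 1 - k.+1 = m + 2 * f - k); last by lia.
    have := even_top (m + 2 * f - k) ltac:(lia).
    by have := even_top (m + 2 * f + 1 - k) ltac:(lia); lia.
  have := @pos_in_first (m + 2 * f + 1 - k) ltac:(lia).
  by have := even_top (m + 2 * f + 1 - k) ltac:(lia); lia.
move=> lt_r; have := h_id r.+1 ltac:(lia).
rewrite /h (_ : m + 2 * f + 1 - r.+1 = m + 2 * f - r); last by lia.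
have := even_top (m + 2 * f - r) ltac:(lia) => even_g h_r.
by rewrite (_ : 2 * r + 2 = g (m + 2 * f - r)) ?act_permKV //; lia.
Qed.

Lemma first_component_vals a : 0 < a <= 2 * f -> u a = m + d0img f a.
Proof.
move=> /andP[a_gt0 le_a]; rewrite /d0img le_a; case: (boolP (odd a)) => [odd_a | even_a].
  by rewrite -{1}(_ : 2 * a./2 + 1 = a) ?col1_val; lia.
by rewrite -{1}(_ : 2 * (a./2).-1 + 2 = a) ?col2_val; lia.
Qed.

End FirstComponent.

Lemma d0img_in n f a : 2 * f <= n -> 0 < a <= n -> 0 < d0img f a <= n.
Proof. by rewrite /d0img; case: (leqP a (2 * f)); case: (boolP (odd a)); lia. Qed.

Lemma d0img_first f a : 0 < a <= 2 * f -> 0 < d0img f a <= 2 * f.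
Proof. by rewrite /d0img; case: (leqP a (2 * f)); case: (boolP (odd a)); lia. Qed.

Lemma d0img_second f a : 2 * f < a -> d0img f a = a.
Proof. by rewrite /d0img ltnNge => /negbTE->. Qed.

Lemma d0img_inj n f a b : 2 * f <= n -> 0 < a <= n -> 0 < b <= n ->
  d0img f a = d0img f b -> a = b.
Proof.
rewrite /d0img; case: (leqP a (2 * f)); case: (boolP (odd a));
  case: (leqP b (2 * f)); case: (boolP (odd b)); lia.
Qed.

Lemma act_d0 n f a : 2 * f <= n -> 0 < a <= n -> act (d0 n f) a = d0img f a.
Proof.
move=> le_n a_rng.
have d0funE (i : 'I_n) : d0fun f i = (d0img f i.+1).-1 :> nat.
  have lt_i := ltn_ord i.
  by rewrite /d0fun insubdK // unfold_in; have := @d0img_in n f i.+1 le_n ltac:(lia); lia.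
have d0fun_inj : injective (d0fun f : 'I_n -> 'I_n).
  move=> i k /(congr1 val); rewrite /= !d0funE => eq_ik; apply: val_inj => /=.
  have lt_i := ltn_ord i; have lt_k := ltn_ord k.
  have := @d0img_in n f i.+1 le_n ltac:(lia); have := @d0img_in n f k.+1 le_n ltac:(lia).
  by move=> ? ?; apply: succn_inj; apply: (d0img_inj le_n); lia.
have d0E (i : 'I_n) : d0 n f i = d0fun f i.
  have val_d0 : val (d0 n f) = [ffun i => d0fun f i] by rewrite /d0 insubdK //; exact: perm_proof.
  by rewrite [@fun_of_perm]unlock val_d0 ffunE.
case: a a_rng => // a a_rng; have lt_a : a < n by lia.
have /andP[d0_gt0 _] := d0img_in le_n a_rng.
by rewrite -[a]/(Ordinal lt_a : nat) act_ord d0E d0funE prednK.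
Qed.

Section Rotation.
Variables n k : nat.

Definition rot_ord (i : 'I_n) : 'I_n :=
  Ordinal (ltn_pmod (i + k) (leq_ltn_trans (leq0n i) (ltn_ord i))).

Lemma rot_ord_inj : injective rot_ord.
Proof.
move=> i j /(congr1 val) /= /eqP; rewrite eqn_modDr !modn_small ?ltn_ord //.
by move/eqP/val_inj.
Qed.

Definition rot_perm : 'S_n := perm rot_ord_inj.

Lemma act_rot a : 0 < a <= n -> act rot_perm a = ((a.-1 + k) %% n).+1.
Proof.
case: a => // a /andP[_ lt_a].
by rewrite -[a]/(Ordinal lt_a : nat) act_ord permE.
Qed.

End Rotation.

Lemma act_rot_J0 n f a : 2 * f <= n -> 0 < a <= n ->
  act (rot_perm n (n - 2 * f)) a = if a <= 2 * f then a + (n - 2 * f) else a - 2 * f.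
Proof.
move=> le_n a_rng; rewrite act_rot //; case: (leqP a (2 * f)) => le_a.
  by rewrite modn_small; lia.
by rewrite (_ : a.-1 + (n - 2 * f) = n + (a - 2 * f).-1) ?modnDl ?modn_small; lia.
Qed.

Lemma Dnu_tail_lt n f (d : 'S_n) k : Dnu f d -> 0 < k < n - 2 * f ->
  act d (2 * f + k) < act d (2 * f + k.+1).
Proof. by move=> Dd k_rng; rewrite addnS (Dnu_edgeP f d).1 // nu_edge_tail //; lia. Qed.

Lemma nu_edge_range n f p q : 2 * f <= n -> nu_edge n f p q -> 0 < p /\ q <= n.
Proof. by rewrite /nu_edge; lia. Qed.

Lemma is_dJE n f J (d : 'S_n) :
  is_dJ f J d <-> Dnu f d /\ (forall a, a < 2 * f -> act d a.+1 = nth 0 J a).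
Proof.
rewrite /is_dJ /tab1 /tabJ; split.
  case/andP=> Dd /forallP tabE; split=> // a lt_a.
  have lt_r : a./2 < f by lia.
  have lt_c : odd a < 2 by case: odd.
  have /forallP/(_ (Ordinal lt_c))/eqP := tabE (Ordinal lt_r).
  by rewrite (_ : 2 * (a./2.+1 - 1) + (odd a).+1 = a.+1) ?subn1 //; lia.
case=> -> tabE; apply/forallP => r; apply/forallP => c; apply/eqP.
have lt_r := ltn_ord r; have lt_c := ltn_ord c.
by rewrite (_ : 2 * (r.+1 - 1) + c.+1 = (2 * r + c).+1) ?subn1 ?tabE //; lia.
Qed.

Lemma nth_J0 n f a : a < 2 * f -> nth 0 (J0 n f) a = n - 2 * f + 1 + a.
Proof. exact: nth_iota. Qed.

Lemma is_dJ_rot n f : 2 * f <= n -> is_dJ f (J0 n f) (rot_perm n (n - 2 * f)).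
Proof.
move=> le_n; apply/is_dJE; split=> [|a lt_a]; last first.
  by rewrite nth_J0 // act_rot_J0 ?ifT; lia.
apply/Dnu_edgeP => p q edge; have [p_gt0 le_q] := nu_edge_range le_n edge.
have lt_pq : p < q by move: edge; rewrite /nu_edge; lia.
rewrite !act_rot_J0 -?(nu_edge_same_part edge); try lia.
by case: (leqP p (2 * f)); lia.
Qed.

Lemma eq_rot_of_is_dJ_J0 n f (d : 'S_n) : 2 * f <= n -> is_dJ f (J0 n f) d ->
  d = rot_perm n (n - 2 * f).
Proof.
move=> le_n /is_dJE[Dd firstE].
have first_shift a : 0 < a <= 2 * f -> act d a = a + (n - 2 * f).
  by case: a => // a a_rng; rewrite firstE ?nth_J0; lia.
have second_id : forall k, 0 < k <= n - 2 * f -> act d (2 * f + k) = k.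
  apply: incr_bounded_eq_id => k k_rng; first exact: Dnu_tail_lt.
  have /andP[-> le_v] := act_in d (a := 2 * f + k) ltac:(lia); rewrite leqNgt /=.
  apply/negP => gt_v; set v := act d (2 * f + k) in le_v gt_v.
  have := first_shift (v - (n - 2 * f)) ltac:(lia); rewrite subnK; last by lia.
  by move/act_perm_inj; lia.
apply: eq_perm_act => a /andP[a_gt0 le_a]; rewrite act_rot_J0 ?a_gt0 //.
case: (leqP a (2 * f)) => a_rng; first by rewrite first_shift ?a_gt0.
by rewrite -{1}(subnKC (ltnW a_rng)) second_id //; lia.
Qed.

Lemma dJ_J0 n f : 2 * f <= n -> dJ n f (J0 n f) = rot_perm n (n - 2 * f).
Proof.
move=> le_n; rewrite /dJ; case: pickP => [d /(eq_rot_of_is_dJ_J0 le_n) // | no_dJ].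
by have := no_dJ (rot_perm n (n - 2 * f)); rewrite is_dJ_rot.
Qed.

Lemma blocked_second_row n f (d : 'S_n) : 2 * f <= n -> Dnu f d -> ascents_blocked f d 1 n ->
  forall k, 0 < k <= n - 2 * f -> act d (2 * f + k) = k.
Proof.
move=> le_n Dd blocked; apply: incr_pred_closed_eq_id => k k_rng.
- exact: Dnu_tail_lt.
- by have := act_in d (a := 2 * f + k) ltac:(lia); lia.
set w := act d (2 * f + k) => gt_w.
have le_w : w <= n by have := act_in d (a := 2 * f + k) ltac:(lia); lia.
set p := act d^-1 w.-1.
have p_rng : 0 < p <= n by apply: act_in; lia.
have up : act d p = w.-1 by rewrite act_permKV.
have gw : act d^-1 (w.-1).+1 = 2 * f + k by rewrite prednK ?act_permK //; lia.
have gt_p : 2 * f < p.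
  case: (ltngtP p (2 * f + k)) => [asc | | eq_p]; [|lia|by move: up; rewrite eq_p; lia].
  have := nu_edge_same_part (@blocked w.-1 ltac:(lia) ltac:(by rewrite gw)).
  by rewrite gw; lia.
by exists (p - 2 * f); [lia | rewrite subnKC ?up //; lia].
Qed.

Lemma first_component_onto_window n f m (d : 'S_n) : m + 2 * f <= n ->
  (forall b, 2 * f < b <= n -> ~~ (m < act d b <= m + 2 * f)) ->
  (forall v, 0 < v <= n -> ~~ (m < v <= m + 2 * f) -> exists2 b, 2 * f < b <= n & act d b = v) ->
  forall a, 0 < a <= n -> (a <= 2 * f) = (m < act d a <= m + 2 * f).
Proof.
move=> le_n second_out second_onto a a_rng; case: (leqP a (2 * f)) => [le_a | gt_a].
  apply/esym/negP => /negP out; have [b b_rng eq_b] := second_onto _ (act_in d a_rng) out.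
  by move/act_perm_inj: eq_b; lia.
by apply/esym/negbTE/second_out; lia.
Qed.

Lemma blocked_Dnu_eq_d0dJ0 n f (d : 'S_n) : 2 * f <= n -> Dnu f d -> ascents_blocked f d 1 n ->
  d = (d0 n f * dJ n f (J0 n f))%g.
Proof.
move=> le_n Dd blocked; have second := blocked_second_row le_n Dd blocked.
have first := @first_component_vals n f (n - 2 * f) d ltac:(lia) Dd.
have {}first : forall a, 0 < a <= 2 * f -> act d a = n - 2 * f + d0img f a.
  apply: first => [|j j_rng]; last by apply: blocked; lia.
  apply: first_component_onto_window => [|b b_rng|v v_rng out]; first by lia.
    by have := second (b - 2 * f) ltac:(lia); rewrite subnKC; lia.
  by exists (2 * f + v); [lia | rewrite second //; lia].
apply: eq_perm_act => a; rewrite inE => a_rng; rewrite act_permM dJ_J0 // act_d0 //.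
have d0a_rng := d0img_in le_n a_rng; rewrite act_rot_J0 //.
case: (leqP a (2 * f)) => [le_a | gt_a].
  by have d0a := @d0img_first f a ltac:(lia); rewrite first ?ifT; lia.
rewrite d0img_second // leqNgt gt_a /=.
by rewrite -{1}(subnKC (ltnW gt_a)) second //; lia.
Qed.

Lemma inS2fP n f (d : 'S_n) : reflect (forall a, 2 * f < a -> act d a = a) (inS2f f d).
Proof.
apply: (iffP forallP) => [fixd a lt_a | fixd i]; last first.
  by apply/implyP => le_i; apply/eqP/val_inj/succn_inj; rewrite -act_ord fixd.
case: (ltnP n a) => [lt_na | le_an]; first exact: act_out.
case: a lt_a le_an => // a lt_a le_an; have lt_an : a < n by [].
move/implyP/(_ lt_a)/eqP: (fixd (Ordinal lt_an)) => fix_a.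
by rewrite -[a]/(Ordinal lt_an : nat) act_ord fix_a.
Qed.

Lemma blocked_Df_eq_d0 n f (d : 'S_n) : 2 * f <= n -> Df f d -> ascents_blocked f d 1 (2 * f) ->
  d = d0 n f.
Proof.
move=> le_n /andP[Dd /inS2fP fixd] blocked.
have first := @first_component_vals n f 0 d ltac:(lia) Dd.
have {}first : forall a, 0 < a <= 2 * f -> act d a = d0img f a.
  apply: first => //; apply: first_component_onto_window => [|b b_rng|v v_rng out]; first by lia.
    by rewrite fixd; lia.
  by exists v; [lia | rewrite fixd; lia].
apply: eq_perm_act => a; rewrite inE => a_rng; rewrite act_d0 //.
by case: (leqP a (2 * f)) => [le_a | gt_a]; [rewrite first; lia | rewrite fixd ?d0img_second].
Qed.

Lemma Df_weak_le_d0 n f (d : 'S_n) : 2 * f <= n -> Df f d -> weak_le d (d0 n f).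
Proof.
move=> le_n; elim/(induction_ltof1 _ (fun d : 'S_n => n * n - len d)): d => d IH Dfd.
case: (eqVneq d (d0 n f)) => [-> | ne_d0]; first exact: weak_le_refl.
have /andP[Dd /inS2fP fixd] := Dfd.
case: (boolP (has (up_step f d) (index_iota 1 (2 * f)))) => [/hasP[j] | no_up]; last first.
  by case/eqP: ne_d0; apply: blocked_Df_eq_d0 => //; apply: ascents_blocked_of_no_up.
rewrite mem_index_iota => j_rng /andP[Dj /eqP]; rewrite addn1 => len_dj.
apply: (@weak_le_sadj _ _ _ j _ len_dj); first by lia.
apply: IH; first by apply/ltP; have := len_le (d * sadj n j)%g; lia.
rewrite /Df Dj; apply/inS2fP => a lt_a.
by rewrite act_permM fixd // act_sadj /adjswap ?ifF //; apply/eqP; lia.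
Qed.

Lemma exists_up_step n f (d : 'S_n) : 2 * f <= n -> Dnu f d ->
  d != (d0 n f * dJ n f (J0 n f))%g ->
  exists j, [/\ 1 <= j <= n - 1, Dnu f (d * sadj n j)%g & len (d * sadj n j)%g = len d + 1].
Proof.
move=> le_n Dd ne_d; case: (boolP (has (up_step f d) (index_iota 1 n))) => [/hasP[j] | no_up].
  by rewrite mem_index_iota => j_rng /andP[Dj /eqP len_dj]; exists j; split=> //; lia.
by case/eqP: ne_d; apply: blocked_Dnu_eq_d0dJ0 => //; apply: ascents_blocked_of_no_up.
Qed.

Lemma mem_dJ n f J (d : 'S_n) : inP n f J -> is_dJ f J d ->
  forall p, 0 < p <= n -> (act d p \in J) = (p <= 2 * f).
Proof.
case/and3P=> /eqP size_J _ _ /is_dJE[_ firstE] p p_rng.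
case: (leqP p (2 * f)) => [le_p | gt_p].
  by case: p p_rng le_p => // p _ le_p; rewrite firstE // mem_nth // size_J.
apply/negbTE/negP => in_J.
have lt_idx : index (act d p) J < 2 * f by rewrite -size_J index_mem.
by have := firstE _ lt_idx; rewrite nth_index // => /act_perm_inj; lia.
Qed.

Lemma inP_swap n f J j : inP n f J -> j < n -> j \in J -> j.+1 \notin J ->
  inP n f (map (adjswap j) J).
Proof.
case/and3P=> size_J sorted_J /allP J_rng lt_j in_j out_j1; apply/and3P; split.
- by rewrite size_map.
- apply: (homo_sorted_in (P := mem J) _ (allss J) sorted_J) => x y x_in y_in lt_xy.
  apply: adjswap_mono => //.
  by apply: contraNneq out_j1 => -[_ <-].
apply/allP => _ /mapP[x x_in ->]; have /= := J_rng x x_in; have /= := J_rng j in_j.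
by rewrite /= /adjswap; do !case: eqP; lia.
Qed.

Lemma is_dJ_swap n f J (d : 'S_n) j : 2 * f <= n -> inP n f J -> is_dJ f J d ->
  0 < j < n -> (j \in J) != (j.+1 \in J) -> is_dJ f (map (adjswap j) J) (d * sadj n j)%g.
Proof.
move=> le_n inJ dJd j_rng ne_j; have memJ := mem_dJ inJ dJd.
case/and3P: inJ => /eqP size_J _ _; case/is_dJE: dJd => Dd firstE; apply/is_dJE; split.
  apply: Dnu_mul_sadj => // p q edge; have [p_gt0 le_q] := nu_edge_range le_n edge.
  apply: contra ne_j; rewrite xpair_eqE => /andP[/eqP <- /eqP <-].
  by rewrite !memJ ?(nu_edge_same_part edge) //; move: edge; rewrite /nu_edge; lia.
by move=> a lt_a; rewrite act_permM firstE // act_sadj // (nth_map 0) // size_J.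
Qed.


Lemma succ_closed_J0 n f J : inP n f J -> {in J, forall j, j < n -> j.+1 \in J} -> J = J0 n f.
Proof.
case/and3P=> /eqP size_J sorted_J /allP J_rng closed.
case: J size_J sorted_J J_rng closed => [|x J'] size_J sorted_J J_rng closed.
  by rewrite /J0 -size_J.
have x_min : all (ltn x) J' := order_path_min ltn_trans sorted_J.
have up k : x + k <= n -> x + k \in x :: J'.
  elim: k => [|k IH] le_xk; first by rewrite addn0 mem_head.
  by rewrite addnS closed ?IH //; lia.
have x_rng := J_rng x (mem_head _ _).
have eq_J : x :: J' = iota x (n - x).+1.
  apply: (irr_sorted_eq ltn_trans ltnn) => //; first exact: iota_ltn_sorted.
  move=> y; rewrite mem_iota; apply/idP/idP => [y_in | y_rng].
    have /= := J_rng y y_in; move: y_in; rewrite inE => /orP[/eqP -> | /(allP x_min) /=]; lia.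
  by rewrite -(subnKC (_ : x <= y)) ?up //; lia.
by move: size_J; rewrite eq_J size_iota /J0 => <-; congr iota; lia.
Qed.

Lemma J_ascent n f J : inP n f J -> J != J0 n f -> exists2 j, j < n & (j \in J) && (j.+1 \notin J).
Proof.
move=> inJ ne_J0.
have [/hasP[j j_in /andP[lt_j out_j1]] | no_ascent] :=
  boolP (has (fun j => (j < n) && (j.+1 \notin J)) J).
  by exists j; rewrite ?j_in.
case/eqP: ne_J0; apply: succ_closed_J0 => // j j_in lt_j.
by move/hasPn/(_ j j_in): no_ascent; rewrite lt_j negbK.
Qed.

Definition deficit n (J : seq nat) := \sum_(x <- J) (n - x).

Lemma deficit_swap n f J j : inP n f J -> j < n -> j \in J -> j.+1 \notin J ->
  deficit n (map (adjswap j) J) < deficit n J.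
Proof.
case/and3P=> _ sorted_J _ lt_j in_j out_j1; have uniq_J := sorted_uniq ltn_trans ltnn sorted_J.
rewrite /deficit big_map !(big_rem j in_j) /= {1}/adjswap eqxx -addSn leq_add //; first by lia.
rewrite leq_eqVlt; apply/orP; left; apply/eqP/eq_big_seq => x x_in.
have ne_xj : x != j by apply: contraTneq x_in => ->; rewrite mem_rem_uniqF.
have ne_xj1 : x != j.+1 by apply: contraNneq out_j1 => <-; apply: mem_rem x_in.
by rewrite /adjswap (negPf ne_xj) (negPf ne_xj1).
Qed.

Lemma dJ_exists n f J : 2 * f <= n -> inP n f J -> exists d : 'S_n, is_dJ f J d.
Proof.
move=> le_n; elim/(induction_ltof1 _ (deficit n)): J => J IH inJ.
case: (eqVneq J (J0 n f)) => [-> | ne_J0].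
  by exists (rot_perm n (n - 2 * f)); apply: is_dJ_rot.
have [j lt_j /andP[in_j out_j1]] := J_ascent inJ ne_J0.
have [d dJd] :=
  IH _ (elimT ltP (deficit_swap inJ lt_j in_j out_j1)) (inP_swap inJ lt_j in_j out_j1).
have adj_j : adjswap j j.+1 = j by rewrite /adjswap eqxx; case: eqP; lia.
have adj_j1 : adjswap j j = j.+1 by rewrite /adjswap eqxx.
have j_gt0 : 0 < j by have /and3P[_ _ /allP/(_ j in_j)/andP[]] := inJ.
exists (d * sadj n j)%g; rewrite -[J](mapK (adjswapK j)).
apply: is_dJ_swap => //; [exact: inP_swap | by rewrite j_gt0 |].
by rewrite -adj_j1 -{1}adj_j !(mem_map (@adjswap_inj j)) in_j (negPf out_j1).
Qed.

Lemma dJ_spec n f J : 2 * f <= n -> inP n f J -> is_dJ f J (dJ n f J).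
Proof.
move=> le_n inJ; rewrite /dJ; case: pickP => [// | no_dJ].
by have [d dJd] := dJ_exists le_n inJ; move: (no_dJ d); rewrite dJd.
Qed.

Lemma is_dJ_weak_le_dJ0 n f J (d : 'S_n) : 2 * f <= n -> inP n f J -> is_dJ f J d ->
  weak_le d (dJ n f (J0 n f)).
Proof.
move=> le_n; elim/(induction_ltof1 _ (deficit n)): J d => J IH d inJ dJd.
case: (eqVneq J (J0 n f)) => [eq_J | ne_J0].
  rewrite dJ_J0 // -(eq_rot_of_is_dJ_J0 le_n (_ : is_dJ f (J0 n f) d)) -?eq_J //.
  exact: weak_le_refl.
have [j lt_j /andP[in_j out_j1]] := J_ascent inJ ne_J0.
have j_gt0 : 0 < j by have /and3P[_ _ /allP/(_ j in_j)/andP[]] := inJ.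
have memJ := mem_dJ inJ dJd.
have p_rng : 0 < act d^-1 j <= n by apply: act_in; lia.
have q_rng : 0 < act d^-1 j.+1 <= n by apply: act_in; lia.
have asc : act d^-1 j < act d^-1 j.+1.
  move: (memJ _ p_rng) (memJ _ q_rng); rewrite !act_permKV in_j (negPf out_j1); lia.
apply: (@weak_le_sadj _ _ _ j); [lia | by rewrite len_mul_sadj //; lia |].
apply: IH (elimT ltP (deficit_swap inJ lt_j in_j out_j1)) _ (inP_swap inJ lt_j in_j out_j1) _.
by apply: is_dJ_swap; rewrite ?in_j ?(negPf out_j1) //; lia.
Qed.

Theorem lemma5p11 (n f : nat) (hf1 : 1 <= f) (hf2 : f <= n./2) :
  (forall d : 'S_n, Df f d ->
     exists w : 'S_n, d0 n f = (d * w)%g /\ len (d0 n f) = len d + len w) /\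
  (forall J : seq nat, inP n f J ->
     exists w' : 'S_n, dJ n f (J0 n f) = (dJ n f J * w')%g /\
       len (dJ n f (J0 n f)) = len (dJ n f J) + len w') /\
  (forall d : 'S_n, Dnu f d -> d != (d0 n f * dJ n f (J0 n f))%g ->
     exists j : nat, [/\ 1 <= j <= n - 1, Dnu f (d * sadj n j)%g &
       len (d * sadj n j)%g = len d + 1]).
Proof.
have le_n : 2 * f <= n by lia.
split; [|split].
- by move=> d; apply: Df_weak_le_d0.
- by move=> J inJ; apply: is_dJ_weak_le_dJ0 inJ (dJ_spec le_n inJ).
- by move=> d; apply: exists_up_step.
Qed.
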